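(* Consider a feasible solution of a division and assignment problem $(T; \{U_1,\dots,U_p\}, V)$ in which $V$ has $v$ columns, together with a value-preserving bijection between the entry positions of $T$ and the entry positions of $U_1,\dots,U_p,V$. If $(A,B)$ is an inseparable $(T,V)$-pair with $a = |A|$ and $b = |B|$, then $a \le (v-1)b + 1$.
   Context: A division and assignment problem $(T;\{U_1,\dots,U_p\},V)$ consists of matrices $T$ (supply matrix) and $U_1,\dots,U_p,V$ (demand matrices), each with prescribed dimensions and prescribed common row sum per matrix; a feasible solution fills all matrices with real numbers so that all row sums are met and the multiset of entries of $T$ equals the multiset union of the entries of $U_1,\dots,U_p,V$. Fix such a solution together with a bijection $\phi$ from the entry positions of $U_1,\dots,U_p,V$ onto the entry positions of $T$ preserving values; an entry of $V$ is said to lie in the row of $T$ containing its image under $\phi$. A $(T,V)$-pair is a pair $(A,B)$ where $A$ is a set of rows of $T$ and $B$ is a set of rows of $V$ such that every entry of every row in $B$ lies in a row of $A$, and every row of $A$ contains at least one entry of a row of $B$. A $(T,V)$-pair $(A,B)$ is inseparable if there do not exist $(T,V)$-pairs $(A_1,B_1)$ and $(A_2,B_2)$ with $A_1\cap A_2=\emptyset$, $A_1\cup A_2=A$, $B_1\cap B_2=\emptyset$, $B_1\cup B_2 = B$. *)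

From mathcomp Require Import all_boot all_order all_algebra.
Set Implicit Arguments. Unset Strict Implicit. Unset Printing Implicit Defensive.
Import GRing.Theory Num.Theory.
Local Open Scope ring_scope.

(* Entry positions of the demand matrices U_1..U_p (U_k of size mU k x nU k)
   and V (size mV x v): a position is either (k, (i, j)) in some U_k,
   or (i, j) in V. *)
Definition demand_pos (p : nat) (mU nU : 'I_p -> nat) (mV v : nat) : finType :=
  ({k : 'I_p & ('I_(mU k) * 'I_(nU k))%type} + ('I_mV * 'I_v))%type.

Definition demand_val (R : Type) (p : nat) (mU nU : 'I_p -> nat) (mV v : nat)
  (U : forall k : 'I_p, 'M[R]_(mU k, nU k)) (V : 'M[R]_(mV, v))
  (d : demand_pos mU nU mV v) : R :=
  match d with
  | inl s => U (tag s) (tagged s).1 (tagged s).2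
  | inr ij => V ij.1 ij.2
  end.

Definition Vrow_in_T (p : nat) (mU nU : 'I_p -> nat) (mV v mT nT : nat)
  (phi : demand_pos mU nU mV v -> ('I_mT * 'I_nT)%type)
  (r : 'I_mV) (c : 'I_v) : 'I_mT :=
  (phi (inr (r, c))).1.

Definition TVpair (p : nat) (mU nU : 'I_p -> nat) (mV v mT nT : nat)
  (phi : demand_pos mU nU mV v -> ('I_mT * 'I_nT)%type)
  (A : {set 'I_mT}) (B : {set 'I_mV}) : Prop :=
  (forall r, r \in B -> forall c : 'I_v, Vrow_in_T phi r c \in A) /\
  (forall a, a \in A -> exists r, exists c : 'I_v, r \in B /\ Vrow_in_T phi r c = a).

Definition inseparable (p : nat) (mU nU : 'I_p -> nat) (mV v mT nT : nat)
  (phi : demand_pos mU nU mV v -> ('I_mT * 'I_nT)%type)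
  (A : {set 'I_mT}) (B : {set 'I_mV}) : Prop :=
  ~ exists (A1 A2 : {set 'I_mT}) (B1 B2 : {set 'I_mV}),
      [/\ TVpair phi A1 B1, TVpair phi A2 B2,
          (A1 != set0) || (B1 != set0), (A2 != set0) || (B2 != set0) &
          [/\ A1 :&: A2 = set0, A1 :|: A2 = A, B1 :&: B2 = set0 & B1 :|: B2 = B]].

Definition feasible (R : ringType) (p : nat) (mU nU : 'I_p -> nat) (mV v mT nT : nat)
  (T : 'M[R]_(mT, nT)) (t : R)
  (U : forall k : 'I_p, 'M[R]_(mU k, nU k)) (u : 'I_p -> R)
  (V : 'M[R]_(mV, v)) (sv : R) : Prop :=
  (forall i, \sum_j T i j = t) /\
  (forall k i, \sum_j U k i j = u k) /\
  (forall i, \sum_j V i j = sv).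

From mathcomp Require Import all_boot all_order all_algebra.
From mathcomp Require Import zify.

Set Implicit Arguments.
Unset Strict Implicit.
Unset Printing Implicit Defensive.

(* Grow a subset S of B one row at a time.  Inseparability guarantees that
   some row of B outside S has an entry in a row of T already reached by S,
   so each new row of V reaches at most v - 1 new rows of T.  Only the
   incidence map (r, c) |-> row of T containing V r c matters: feasibility
   and the values carried by phi play no role. *)

Section Neighbourhood.
Variables (I C K : finType) (f : I -> C -> K).
Implicit Types (S B : {set I}) (r : I) (c : C) (a : K).

Definition nbhd S : {set K} := f @2: (S, [set: C]).

Definition linked B : Prop :=
  forall S, S != set0 -> S \proper B ->
  [exists r in B :\: S, exists c, f r c \in nbhd S].

Lemma nbhdP S a : reflect (exists r c, r \in S /\ f r c = a) (a \in nbhd S).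
Proof.
apply: (iffP imset2P) => [[r c rS _ ->] | [r [c [rS <-]]]]; first by exists r, c.
by exists r c; rewrite ?inE.
Qed.

Lemma nbhd_f S r c : r \in S -> f r c \in nbhd S.
Proof. by move=> rS; apply/nbhdP; exists r, c. Qed.

Lemma nbhd0 : nbhd set0 = set0.
Proof. by apply/setP=> a; rewrite inE; apply/nbhdP=> [[r [c []]]]; rewrite inE. Qed.

Lemma nbhdU S1 S2 : nbhd (S1 :|: S2) = nbhd S1 :|: nbhd S2.
Proof. exact: imset2Ul. Qed.

Lemma card_nbhd1 r : (#|nbhd [set r]| <= #|C|)%N.
Proof. by rewrite /nbhd imset2_set1l -cardsT leq_imset_card. Qed.

Lemma card_nbhdU1 S r c :
  r \notin S -> f r c \in nbhd S ->
  (#|nbhd S| <= (#|C| - 1) * #|S| + 1)%N ->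
  (#|nbhd (r |: S)| <= (#|C| - 1) * #|r |: S| + 1)%N.
Proof.
move=> rS frc_S bound_S; rewrite nbhdU cardsU1 rS.
have meet : (0 < #|nbhd [set r] :&: nbhd S|)%N.
  by rewrite card_gt0; apply/set0Pn; exists (f r c); rewrite inE nbhd_f ?set11.
have := cardsUI (nbhd [set r]) (nbhd S); have := card_nbhd1 r; nia.
Qed.

Lemma linked_grow B k : linked B -> (k < #|B|)%N ->
  exists2 S : {set I}, S \subset B & #|S| = k.+1 /\ (#|nbhd S| <= (#|C| - 1) * #|S| + 1)%N.
Proof.
move=> linkB; elim: k => [|k IH] ltkB.
  have [r rB] : exists r, r \in B by apply/set0Pn; rewrite -card_gt0.
  exists [set r]; first by rewrite sub1set.
  by rewrite cards1; have := card_nbhd1 r; split=> //; lia.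
have [S sSB [cardS bound_S]] := IH (ltnW ltkB).
have S_neq0 : S != set0 by rewrite -card_gt0 cardS.
have ltSB : S \proper B by rewrite properEcard sSB cardS.
have /exists_inP [r /setDP [rB rS] /existsP [c frc_S]] := linkB S S_neq0 ltSB.
exists (r |: S); first by rewrite subUset sub1set rB.
by split; [rewrite cardsU1 rS cardS | apply: card_nbhdU1 frc_S bound_S].
Qed.

Lemma linked_card_nbhd B : linked B -> (#|nbhd B| <= (#|C| - 1) * #|B| + 1)%N.
Proof.
move=> linkB; have [->|B_neq0] := eqVneq B set0; first by rewrite nbhd0 !cards0.
have ltB : (#|B|.-1 < #|B|)%N by rewrite prednK ?card_gt0.
have [S sSB [cardS bound_S]] := linked_grow linkB ltB.
have <- // : S = B.
by apply/eqP; rewrite eqEcard sSB cardS prednK ?card_gt0 ?leqnn.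
Qed.

End Neighbourhood.

Section TVpairs.
Variables (p : nat) (mU nU : 'I_p -> nat) (mV v mT nT : nat)
  (phi : demand_pos mU nU mV v -> ('I_mT * 'I_nT)%type).
Local Notation f := (Vrow_in_T phi).

Lemma TVpairE A B : TVpair phi A B <-> nbhd f B = A.
Proof.
split=> [[inA onA] | <-].
  apply/setP=> a; apply/nbhdP/idP=> [[r [c [rB <-]]] | /onA]; first exact: inA.
  by move=> [r [c [rB fa]]]; exists r, c.
by split=> [r rB c | a /nbhdP]; first exact: nbhd_f.
Qed.

Lemma inseparable_linked A B :
  TVpair phi A B -> inseparable phi A B -> linked f B.
Proof.
move=> /TVpairE nbhdB insep S S_neq0 ltSB.
have [sSB [b bB bS]] := properP ltSB.
apply: contra_notT insep => /exists_inPn isolated.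
have BSK : S :|: B :\: S = B by rewrite -{1}(setIidPr sSB) setID.
exists (nbhd f S), (nbhd f (B :\: S)), S, (B :\: S); split.
- exact/TVpairE.
- exact/TVpairE.
- by rewrite S_neq0 orbT.
- by apply/orP; right; apply/set0Pn; exists b; rewrite inE bS.
- split.
  + apply/setP=> a; rewrite !inE; apply/andP=> [[/nbhdP [s [c [sS <-]]]]].
    move=> /nbhdP [r [d [rBS frd]]].
    by move/existsPn: (isolated r rBS) => /(_ d); rewrite frd nbhd_f.
  + by rewrite -nbhdU BSK.
  + by apply/setP=> x; rewrite !inE; case: (x \in S); rewrite ?andbF.
  + exact: BSK.
Qed.

End TVpairs.

Theorem lemma3 (R : realFieldType)
  (mT nT : nat) (T : 'M[R]_(mT, nT)) (t : R)
  (p : nat) (mU nU : 'I_p -> nat) (U : forall k : 'I_p, 'M[R]_(mU k, nU k))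
  (u : 'I_p -> R)
  (mV v : nat) (V : 'M[R]_(mV, v)) (sv : R)
  (Hfeas : feasible T t U u V sv)
  (phi : demand_pos mU nU mV v -> ('I_mT * 'I_nT)%type)
  (Hbij : bijective phi)
  (Hval : forall d, demand_val U V d = T (phi d).1 (phi d).2)
  (A : {set 'I_mT}) (B : {set 'I_mV})
  (Hpair : TVpair phi A B) (Hins : inseparable phi A B) :
  (#|A| <= (v - 1) * #|B| + 1)%N.
Proof.
have := linked_card_nbhd (inseparable_linked Hpair Hins).
by rewrite (TVpairE phi A B).1 // card_ord.
Qed.
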